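(* Let $G$ be a graph on $n$ vertices. If $G$ has a spanning subgraph $H$ (i.e. $H$ has the same vertex set as $G$ and $E(H)\subseteq E(G)$) such that $H$ is bipartite and $\delta(H)\geq 2$, then $F(G)\geq \lceil n/2\rceil$.
   Context: All graphs are finite and simple. Given a graph $G=(V,E)$ and a set $S\subseteq V$ of filled vertices, the color change rule is: if a filled vertex $v$ has exactly one unfilled neighbor $w$, then $w$ becomes filled. The derived set of $S$ is the set of filled vertices obtained after applying the rule until no further application is possible. $S$ is a zero forcing set if its derived set is $V$; otherwise $S$ is a failed zero forcing set. The failed zero forcing number $F(G)$ is the maximum size of a failed zero forcing set of $G$. *)

From mathcomp Require Import all_boot all_order.
Set Implicit Arguments. Unset Strict Implicit. Unset Printing Implicit Defensive.

Definition simple_graph (T : finType) (e : rel T) : Prop :=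
  symmetric e /\ irreflexive e.

Section ZeroForcing.
Variables (T : finType) (e : rel T).

Definition nbhd (v : T) : {set T} := [set w | e v w].

(* One round of the color change rule: add every vertex w that is the unique
   unfilled neighbor of some filled vertex v. *)
Definition cc_step (A : {set T}) : {set T} :=
  A :|: [set w | [exists v, [&& v \in A, e v w, w \notin A &
                   [forall u, (e v u && (u != w)) ==> (u \in A)]]]].

(* Each round is
   monotone and the set only grows, so after #|T| rounds a fixed point is
   reached; this is the (order-independent) derived set. *)
Definition derived_set (S : {set T}) : {set T} := iter #|T| cc_step S.

Definition zero_forcing_set (S : {set T}) : bool := derived_set S == [set: T].
Definition failed_zfs (S : {set T}) : bool := ~~ zero_forcing_set S.

(* F(G) = max size of a failed zero forcing set (0 if none exists). *)
Definition failed_zf_number : nat :=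
  \max_(S : {set T} | failed_zfs S) #|S|.

End ZeroForcing.

Definition min_deg_ge (T : finType) (e : rel T) (k : nat) : Prop :=
  forall v : T, k <= #|[set w | e v w]|.

Definition bipartite (T : finType) (e : rel T) : Prop :=
  exists c : T -> bool, forall u v, e u v -> c u != c v.

Definition spanning_subgraph (T : finType) (h g : rel T) : Prop :=
  simple_graph h /\ forall u v, h u v -> g u v.

From mathcomp Require Import all_boot all_order.
From mathcomp Require Import zify.
Set Implicit Arguments. Unset Strict Implicit. Unset Printing Implicit Defensive.

(* Each colour class of the bipartite subgraph H is stalled: every vertex has
   at least two H-neighbours, all of them in the other class, so no filled
   vertex ever has a unique unfilled neighbour in G. Both classes are thus
   failed zero forcing sets, and the larger one has at least ceil(n/2)
   vertices. *)

Section Stalled.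
Variables (T : finType) (e : rel T).

Definition stalled (S : {set T}) : Prop :=
  forall v w, v \in S -> e v w -> w \notin S ->
  exists2 u, e v u & (u != w) && (u \notin S).

Lemma cc_step_stalled S : stalled S -> cc_step e S = S.
Proof.
move=> stS; apply/setP=> w; rewrite /cc_step in_setU.
apply/idP/idP => [|->] //; case/orP => // /[!inE].
case/existsP=> v /and4P[vS evw wS /forallP filled].
have [u evu /andP[uw uS]] := stS v w vS evw wS.
by have := filled u; rewrite evu uw /= (negPf uS).
Qed.

Lemma derived_set_stalled S : stalled S -> derived_set e S = S.
Proof. by move=> stS; apply/iter_fix/cc_step_stalled. Qed.

Lemma failed_zfs_stalled S : stalled S -> S != [set: T] -> failed_zfs e S.
Proof. by move=> stS; rewrite /failed_zfs /zero_forcing_set derived_set_stalled. Qed.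

Lemma leq_card_failed_zf_number S : failed_zfs e S -> #|S| <= failed_zf_number e.
Proof. exact: leq_bigmax_cond. Qed.

End Stalled.

Lemma min_deg2_other_nbr (T : finType) (h : rel T) v w :
  min_deg_ge h 2 -> exists2 u, h v u & u != w.
Proof.
move=> md; have : 0 < #|[set u | h v u] :\ w|.
  by have := md v; rewrite (cardsD1 w); have := leq_b1 (w \in [set u | h v u]); lia.
by case/card_gt0P=> u; rewrite !inE => /andP[uw hvu]; exists u.
Qed.

Section ColourClasses.
Variables (T : finType) (g h : rel T) (c : T -> bool).
Hypotheses (hg : forall u v, h u v -> g u v) (hc : forall u v, h u v -> c u != c v).
Hypothesis md : min_deg_ge h 2.

Definition colour_class (b : bool) : {set T} := [set x | c x == b].

Lemma colour_class_stalled b : stalled g (colour_class b).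
Proof.
move=> v w /[!inE] /eqP cv _ _.
have [u hvu uw] := min_deg2_other_nbr v w md.
exists u; first exact: hg.
by rewrite uw inE -cv eq_sym hc.
Qed.

Lemma colour_class_proper b (v : T) : colour_class b != [set: T].
Proof.
apply/eqP=> /setP full.
have [w hvw _] := min_deg2_other_nbr v v md.
have := full v; have := full w; rewrite !inE => /eqP cw /eqP cv.
by have := hc hvw; rewrite cv cw eqxx.
Qed.

Lemma card_colour_classes : #|colour_class true| + #|colour_class false| = #|T|.
Proof.
rewrite -(cardsC (colour_class true)); congr (_ + _).
by apply: eq_card => x; rewrite !inE; case: (c x).
Qed.

End ColourClasses.

Theorem corollary3 (T : finType) (g h : rel T) :
  simple_graph g ->
  spanning_subgraph h g ->
  bipartite h ->
  min_deg_ge h 2 ->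
  failed_zf_number g >= (#|T| + 1) %/ 2.
Proof.
move=> _ [_ hg] [c hc] md.
have [->|/card_gt0P[v _]] := posnP #|T|; first by [].
have failed b : #|colour_class c b| <= failed_zf_number g.
  apply/leq_card_failed_zf_number/failed_zfs_stalled.
    exact: colour_class_stalled hg hc md b.
  exact: colour_class_proper hc md b v.
have := card_colour_classes c; have := failed true; have := failed false.
lia.
Qed.
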